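(* Let $\mathcal{F}$ be a vector space over a field $K$, let $T \colon \mathcal{F} \to \mathcal{F}$ be a surjective linear map, let $\mathcal{B} \leq \mathcal{F}^*$ be a finite-dimensional subspace of the dual space, and let $\mathcal{E} \leq \mathcal{F}$ be a subspace. Let $G \colon \mathcal{F} \to \mathcal{F}$ be any linear right inverse of $T$ (i.e. $TG = 1$). Then $$T(\mathcal{B}^{\perp})^{\perp} = G^*\bigl(\mathcal{B} \cap (\operatorname{Ker} T)^{\perp}\bigr).$$ Moreover, $\dim T(\mathcal{B}^{\perp})^{\perp} = \dim \mathcal{E}'$ for every subspace $\mathcal{E}' \leq \mathcal{F}$ with $\mathcal{F} = T(\mathcal{B}^{\perp}) \dotplus \mathcal{E}'$ (direct sum).
   Context: $\mathcal{F}^*$ denotes the algebraic dual of $\mathcal{F}$. For $U \leq \mathcal{F}$, $U^{\perp} = \{\beta \in \mathcal{F}^* : \beta(u) = 0 \text{ for all } u \in U\}$; for $\mathcal{B} \leq \mathcal{F}^*$, $\mathcal{B}^{\perp} = \{v \in \mathcal{F} : \beta(v) = 0 \text{ for all } \beta \in \mathcal{B}\}$. For a linear map $S\colon \mathcal{F} \to \mathcal{F}$, the transpose $S^* \colon \mathcal{F}^* \to \mathcal{F}^*$ is $\gamma \mapsto \gamma \circ S$. The triple $(T, \mathcal{B}, \mathcal{E})$ is called a generalized boundary problem. *)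

From HB Require Import structures.
From mathcomp Require Import all_boot all_order all_algebra.
From mathcomp Require Import functions.
Set Implicit Arguments. Unset Strict Implicit. Unset Printing Implicit Defensive.
Import GRing.Theory.
Local Open Scope ring_scope.

Definition is_subspace (K : fieldType) (V : lmodType K) (S : V -> Prop) : Prop :=
  S 0 /\ forall (a : K) (x y : V), S x -> S y -> S (a *: x + y).

Definition has_dim (K : fieldType) (V : lmodType K) (S : V -> Prop) (n : nat) : Prop :=
  exists b : 'I_n -> V,
    (forall i, S (b i)) /\
    (forall c : 'I_n -> K, \sum_(i < n) c i *: b i = 0 -> forall i, c i = 0) /\
    (forall v, S v -> exists c : 'I_n -> K, v = \sum_(i < n) c i *: b i).

Definition finite_dim (K : fieldType) (V : lmodType K) (S : V -> Prop) : Prop :=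
  exists n, has_dim S n.

(* The algebraic dual F^*: linear functionals F -> K, viewed inside the
   K-vector space of all functions F -> K (pointwise operations). *)

Definition is_functional (K : fieldType) (F : lmodType K) (f : (F -> K^o)) : Prop :=
  forall (a : K) (x y : F), f (a *: x + y) = a * f x + f y.

Definition perp (K : fieldType) (F : lmodType K) (U : F -> Prop) : (F -> K^o) -> Prop :=
  fun beta => is_functional beta /\ forall u, U u -> beta u = 0.

Definition perpD (K : fieldType) (F : lmodType K) (B : (F -> K^o) -> Prop) : F -> Prop :=
  fun v => forall beta, B beta -> beta v = 0.

Definition transpose (K : fieldType) (F : lmodType K) (S : F -> F) (g : (F -> K^o)) : (F -> K^o) :=
  fun x => g (S x).

Definition img (A B : Type) (f : A -> B) (S : A -> Prop) : B -> Prop :=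
  fun y => exists x, S x /\ f x = y.

Definition kernel (K : fieldType) (F : lmodType K) (S : F -> F) : F -> Prop :=
  fun x => S x = 0.

Definition meet (A : Type) (S1 S2 : A -> Prop) : A -> Prop := fun x => S1 x /\ S2 x.

Definition direct_sum_whole (K : fieldType) (F : lmodType K) (U E' : F -> Prop) : Prop :=
  (forall x : F, exists u e, U u /\ E' e /\ x = u + e) /\
  (forall x : F, U x -> E' x -> x = 0).

(* If f vanishes on T(B^perp), then f o T vanishes on B^perp, so (B being
   finite dimensional) f o T lies in B; it also kills Ker T, and
   G^*(f o T) = f because T G = 1.  Conversely G^* beta (T v) = beta v, since
   G T v - v lies in Ker T.  For the dimension count, E' is finite dimensional
   because the finitely many functionals beta_i o G separate it (if they all
   vanish at e, then G e lies in B^perp, so e = T G e lies in both T(B^perp)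
   and E', hence is 0); the coordinate functionals of a basis of E' along
   T(B^perp) then form a basis of T(B^perp)^perp. *)
From HB Require Import structures.
From mathcomp Require Import all_boot all_order all_algebra.
From mathcomp Require Import boolp functions ring.
Import GRing.Theory.
Set Implicit Arguments. Unset Strict Implicit.
Local Open Scope ring_scope.

Lemma ordS_ind k (P : 'I_k.+1 -> Prop) :
  P ord_max -> (forall j, P (widen_ord (leqnSn k) j)) -> forall i, P i.
Proof.
move=> Pmax Pwiden [i lt_ik].
have := lt_ik; rewrite ltnS leq_eqVlt => /orP[/eqP ik|lt_ik'].
  by have -> : Ordinal lt_ik = ord_max by apply: val_inj; rewrite /= ik.
by have -> : Ordinal lt_ik = widen_ord (leqnSn k) (Ordinal lt_ik') by apply: val_inj.
Qed.

Definition ord_extend A k (f : 'I_k -> A) (a : A) (i : 'I_k.+1) : A :=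
  if insub (val i) is Some j then f j else a.

Lemma ord_extend_widen A k (f : 'I_k -> A) a j :
  ord_extend f a (widen_ord (leqnSn k) j) = f j.
Proof. by rewrite /ord_extend /= valK. Qed.

Lemma ord_extend_max A k (f : 'I_k -> A) a : ord_extend f a ord_max = a.
Proof. by rewrite /ord_extend insubF //= ltnn. Qed.

Lemma sum_scale_fctE (T : Type) (K : fieldType) n (c : 'I_n -> K)
    (f : 'I_n -> T -> K^o) x :
  (\sum_(i < n) c i *: f i) x = \sum_(i < n) c i * f i x.
Proof. by rewrite fct_sumE. Qed.

Section Subspace.
Variables (K : fieldType) (V : lmodType K) (S : V -> Prop).
Hypothesis subS : is_subspace S.

Lemma subspace0 : S 0. Proof. by case: subS. Qed.

Lemma subspaceZD a x y : S x -> S y -> S (a *: x + y).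
Proof. exact: (proj2 subS). Qed.

Lemma subspaceD x y : S x -> S y -> S (x + y).
Proof. by move=> Sx Sy; rewrite -[x]scale1r; apply: subspaceZD. Qed.

Lemma subspaceZ a x : S x -> S (a *: x).
Proof.
by move=> Sx; rewrite -[_ *: _]addr0; apply: subspaceZD => //; exact: subspace0.
Qed.

Lemma subspaceB x y : S x -> S y -> S (x - y).
Proof. by move=> Sx Sy; rewrite addrC -scaleN1r; apply: subspaceZD. Qed.

Lemma subspace_sum n (c : 'I_n -> K) (v : 'I_n -> V) :
  (forall i, S (v i)) -> S (\sum_(i < n) c i *: v i).
Proof.
by move=> Sv; elim/big_rec: _ => [|i y _ Sy]; [apply: subspace0 | apply: subspaceZD].
Qed.

Lemma subspace_meet (S' : V -> Prop) : is_subspace S' -> is_subspace (meet S S').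
Proof.
move=> [S'0 S'ZD]; split; first by split; [apply: subspace0 | ].
by move=> a x y [Sx S'x] [Sy S'y]; split; [apply: subspaceZD | apply: S'ZD].
Qed.

End Subspace.

Section Functional.
Variables (K : fieldType) (F : lmodType K) (f : F -> K^o).
Hypothesis f_lin : is_functional f.

Lemma functionalD x y : f (x + y) = f x + f y.
Proof. by rewrite -[x]scale1r f_lin scale1r mul1r. Qed.

Lemma functional0 : f 0 = 0.
Proof. by apply: (addrI (f 0)); rewrite -functionalD !addr0. Qed.

Lemma functionalZ a x : f (a *: x) = a * f x.
Proof. by rewrite -[_ *: _]addr0 f_lin functional0 addr0. Qed.

Lemma functionalB x y : f (x - y) = f x - f y.
Proof. by rewrite functionalD -scaleN1r functionalZ mulN1r. Qed.

Lemma functional_sum n (c : 'I_n -> K) (v : 'I_n -> F) :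
  f (\sum_(i < n) c i *: v i) = \sum_(i < n) c i * f (v i).
Proof.
by elim/big_rec2: _ => [|i y1 y2 _ <-]; [apply: functional0 | apply: f_lin].
Qed.

Lemma functional_comp (g : F -> F) : linear g -> is_functional (fun x => f (g x)).
Proof. by move=> g_lin a x y; rewrite g_lin f_lin. Qed.

Lemma functional_normalize x : f x != 0 -> f ((f x)^-1 *: x) = 1.
Proof. by move=> fx_neq0; rewrite functionalZ mulVf. Qed.

Lemma subspace_functional_kernel : is_subspace (fun x => f x = 0).
Proof.
split; first exact: functional0.
by move=> a x y fx fy; rewrite f_lin fx fy mulr0 addr0.
Qed.

Variable x1 : F.
Hypothesis fx1 : f x1 = 1.

Definition functional_proj (x : F) : F := x - f x *: x1.

Lemma functional_proj_linear : linear functional_proj.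
Proof.
move=> a x y; rewrite /functional_proj f_lin scalerDl -scalerA scalerBr.
by rewrite opprD addrACA.
Qed.

Lemma functional_projK x : f (functional_proj x) = 0.
Proof. by rewrite functionalB functionalZ fx1 mulr1 subrr. Qed.

Lemma functional_proj_decomp x : x = functional_proj x + f x *: x1.
Proof. by rewrite subrK. Qed.

End Functional.

Section FunctionalSpan.
Variables (K : fieldType) (F : lmodType K).

Lemma functional_in_span n (b : 'I_n -> F -> K^o) (beta : F -> K^o) :
  (forall i, is_functional (b i)) -> is_functional beta ->
  (forall x, (forall i, b i x = 0) -> beta x = 0) ->
  exists c : 'I_n -> K, forall x, beta x = \sum_(i < n) c i * b i x.
Proof.
elim: n b beta => [|n IH] b beta b_lin beta_lin ker_sub.
  by exists (fun _ => 0) => x; rewrite big_ord0; apply: ker_sub => -[].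
pose bl := b ord_max; pose b' j := b (widen_ord (leqnSn n) j).
have bl_lin : is_functional bl := b_lin ord_max.
have [[x0 blx0]|bl0] := EM (exists x0, bl x0 != 0); last first.
  have {}bl0 x : bl x = 0 by apply/eqP/negPn/negP => ?; apply: bl0; exists x.
  have [|c beta_c] := IH b' beta (fun j => b_lin _) beta_lin.
    by move=> x b'x; apply: ker_sub; apply: ordS_ind.
  exists (ord_extend c 0) => x; rewrite big_ord_recr /= ord_extend_max mul0r addr0.
  by rewrite beta_c; apply: eq_bigr => j _; rewrite ord_extend_widen.
pose x1 := (bl x0)^-1 *: x0; have blx1 : bl x1 = 1 := functional_normalize bl_lin blx0.
pose P := functional_proj bl x1.
have P_lin : linear P := functional_proj_linear bl_lin x1.
have [|c beta_c] := IH (fun j x => b' j (P x)) (fun x => beta (P x))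
    (fun j => functional_comp (b_lin _) P_lin) (functional_comp beta_lin P_lin).
  move=> x b'Px; apply: ker_sub; apply: ordS_ind => //.
  exact: functional_projK.
exists (ord_extend c (beta x1 - \sum_(j < n) c j * b' j x1)) => x.
have -> : beta x = beta (P x) + bl x * beta x1.
  by rewrite -(functionalZ beta_lin) -(functionalD beta_lin) -functional_proj_decomp.
rewrite beta_c big_ord_recr /= ord_extend_max.
under eq_bigr => j _ do rewrite /b' /P /functional_proj (functionalB (b_lin _))
  (functionalZ (b_lin _)) mulrBr mulrCA.
under [in RHS]eq_bigr => j _ do rewrite ord_extend_widen.
rewrite sumrB -mulr_sumr /b' /bl; ring.
Qed.

End FunctionalSpan.

Section SeparatedDimension.
Variables (K : fieldType) (F : lmodType K).

Lemma has_dim_kernel_extend (S : F -> Prop) (l : F -> K^o) n e1 :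
  is_subspace S -> is_functional l ->
  has_dim (meet S (fun x => l x = 0)) n -> S e1 -> l e1 = 1 ->
  has_dim S n.+1.
Proof.
move=> subS l_lin [b' [b'S [b'_free b'_span]]] Se1 le1.
exists (ord_extend b' e1); split.
  by apply: ordS_ind => [|j]; rewrite ?ord_extend_max ?ord_extend_widen //; case: (b'S j).
split.
- move=> c; rewrite big_ord_recr /=.
  under eq_bigr => j _ do rewrite ord_extend_widen.
  rewrite ord_extend_max => sum0.
  have c_max : c ord_max = 0.
    have := congr1 l sum0; rewrite (functionalD l_lin) (functionalZ l_lin).
    rewrite (functional_sum l_lin) (functional0 l_lin) le1 mulr1 big1 ?add0r // => j _.
    by case: (b'S j) => _ ->; rewrite mulr0.
  rewrite c_max scale0r addr0 in sum0.
  by apply: ordS_ind => //; apply: b'_free.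
- move=> v Sv.
  have [|c v_c] := b'_span (functional_proj l e1 v).
    split; last exact: functional_projK.
    by apply: subspaceB => //; apply: subspaceZ.
  exists (ord_extend c (l v)); rewrite big_ord_recr /=.
  under eq_bigr => j _ do rewrite !ord_extend_widen.
  by rewrite -v_c !ord_extend_max -functional_proj_decomp.
Qed.

Lemma has_dim_of_separating m (phi : 'I_m -> F -> K^o) (S : F -> Prop) :
  is_subspace S -> (forall i, is_functional (phi i)) ->
  (forall e, S e -> (forall i, phi i e = 0) -> e = 0) -> exists n, has_dim S n.
Proof.
elim: m phi S => [|m IH] phi S subS phi_lin sep.
  exists 0%N, (fun _ => 0); split; first by case.
  split; first by move=> c _ [].
  by move=> v Sv; exists (fun _ => 0); rewrite big_ord0; apply: sep => // -[].
pose pl := phi ord_max; have pl_lin : is_functional pl := phi_lin ord_max.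
pose S' := meet S (fun x => pl x = 0).
have subS' : is_subspace S' := subspace_meet subS (subspace_functional_kernel pl_lin).
have [|n dimS'] :=
  IH (fun j => phi (widen_ord (leqnSn m) j)) S' subS' (fun j => phi_lin _).
  by move=> e [Se ple] phi'e; apply: sep => //; apply: ordS_ind.
have [[e0 [Se0 ple0]]|pl0] := EM (exists e0, S e0 /\ pl e0 != 0).
  exists n.+1.
  apply: has_dim_kernel_extend dimS' _ (functional_normalize pl_lin ple0) => //.
  exact: subspaceZ.
exists n; suff <- : S' = S by [].
apply: funext => x; apply: propext; split => [[] //|Sx]; split => //.
by apply/eqP/negPn/negP => plx; apply: pl0; exists x.
Qed.

End SeparatedDimension.

Section ComplementCoordinates.
Variables (K : fieldType) (F : lmodType K) (U E' : F -> Prop).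
Hypotheses (subU : is_subspace U) (subE' : is_subspace E').
Hypotheses (U_E'_full : forall x, exists u e, U u /\ E' e /\ x = u + e)
  (U_E'_trivial : forall x, U x -> E' x -> x = 0).
Variables (n : nat) (e : 'I_n -> F).
Hypotheses (E'e : forall j, E' (e j))
  (e_free : forall c : 'I_n -> K, \sum_(j < n) c j *: e j = 0 -> forall j, c j = 0)
  (e_span : forall v, E' v -> exists c : 'I_n -> K, v = \sum_(j < n) c j *: e j).

Lemma complement_coord_exists x :
  exists c : 'I_n -> K, U (x - \sum_(j < n) c j *: e j).
Proof.
have [u [v [Uu [E'v ->]]]] := U_E'_full x.
by have [c ->] := e_span E'v; exists c; rewrite addrK.
Qed.

Lemma complement_coord_unique x (c d : 'I_n -> K) :
  U (x - \sum_(j < n) c j *: e j) -> U (x - \sum_(j < n) d j *: e j) -> c =1 d.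
Proof.
move=> Uc Ud j; apply/eqP; rewrite eq_sym -subr_eq0; apply/eqP; move: j; apply: e_free.
have sumB : \sum_(j < n) (d j - c j) *: e j =
    (x - \sum_(j < n) c j *: e j) - (x - \sum_(j < n) d j *: e j).
  under eq_bigr => j _ do rewrite scalerBl.
  by rewrite sumrB opprB [RHS]addrC addrA subrK.
apply: U_E'_trivial; first by rewrite sumB; exact: (subspaceB subU).
under eq_bigr => j _ do rewrite scalerBl.
by rewrite sumrB; apply: (subspaceB subE'); exact: (subspace_sum subE').
Qed.

Definition complement_coord (x : F) : 'I_n -> K :=
  projT1 (cid (complement_coord_exists x)).

Lemma complement_coordP x : U (x - \sum_(j < n) complement_coord x j *: e j).
Proof. exact: projT2 (cid (complement_coord_exists x)). Qed.

Lemma complement_coord_basis k j : complement_coord (e k) j = (j == k)%:R.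
Proof.
move: j; apply: complement_coord_unique (complement_coordP _) _.
rewrite (bigD1 k) //= eqxx scale1r big1 ?addr0 ?subrr; first exact: subspace0.
by move=> i /negbTE ->; rewrite scale0r.
Qed.

Lemma complement_coord_perp j : perp U (fun x => complement_coord x j : K^o).
Proof.
split.
  move=> a x y /=; move: j.
  apply: complement_coord_unique (complement_coordP _) _.
  have := subspaceD subU (subspaceZ subU a (complement_coordP x)) (complement_coordP y).
  congr U; under [in RHS]eq_bigr => i _ do rewrite scalerDl -scalerA.
  by rewrite big_split /= -scaler_sumr scalerBr opprD addrACA.
move=> u Uu; symmetry; move: j; apply: complement_coord_unique (complement_coordP u).
by rewrite big1 ?subr0 // => i _; rewrite scale0r.
Qed.

Lemma has_dim_perp_complement : has_dim (perp U) n.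
Proof.
exists (fun j => (fun x => complement_coord x j) : F -> K^o).
split; first exact: complement_coord_perp.
split.
  move=> c sum0 k; have := congr1 (fun g => g (e k)) sum0; rewrite sum_scale_fctE /=.
  under eq_bigr => j _ do rewrite complement_coord_basis.
  rewrite (bigD1 k) //= eqxx mulr1 big1 ?addr0 // => j /negbTE ->.
  by rewrite mulr0.
move=> g [g_lin g_perp]; exists (fun j => g (e j)); apply: funext => x.
rewrite sum_scale_fctE; under eq_bigr => j _ do rewrite mulrC.
apply/eqP; rewrite -subr_eq0 -(functional_sum g_lin) -(functionalB g_lin).
by rewrite g_perp //; apply: complement_coordP.
Qed.

End ComplementCoordinates.

Section Annihilators.
Variables (K : fieldType) (F : lmodType K).

Lemma subspace_perpD (B : (F -> K^o) -> Prop) :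
  (forall beta, B beta -> is_functional beta) -> is_subspace (perpD B).
Proof.
move=> B_lin; split; first by move=> beta /B_lin; apply: functional0.
by move=> a x y Bx By beta Bbeta; rewrite (B_lin _ Bbeta) Bx ?By // mulr0 addr0.
Qed.

Lemma subspace_img (W : lmodType K) (T : {linear F -> W}) (S : F -> Prop) :
  is_subspace S -> is_subspace (img T S).
Proof.
move=> subS; split; first by exists 0; rewrite linear0; split => //; apply: subspace0.
move=> a _ _ [x [Sx <-]] [y [Sy <-]]; exists (a *: x + y).
by rewrite linearP; split => //; apply: subspaceZD.
Qed.

Lemma perpD_basis (B : (F -> K^o) -> Prop) m (b : 'I_m -> F -> K^o) x :
  (forall beta, B beta -> exists c : 'I_m -> K, beta = \sum_(i < m) c i *: b i) ->
  (forall i, b i x = 0) -> perpD B x.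
Proof.
move=> b_span bx0 beta /b_span [c ->].
by rewrite sum_scale_fctE big1 // => i _; rewrite bx0 mulr0.
Qed.

Variables (T G : {linear F -> F}).
Hypothesis TG : forall x, T (G x) = x.

Lemma transpose_meet_sub_perp_img (B : (F -> K^o) -> Prop) f :
  img (transpose G) (meet B (perp (kernel T))) f -> perp (img T (perpD B)) f.
Proof.
move=> [beta [[Bbeta [beta_lin beta_ker]] <-]]; split.
  exact: (functional_comp beta_lin (linearP G)).
move=> _ [v [Bv <-]]; rewrite /transpose -[G (T v)](subrK v) (functionalD beta_lin).
by rewrite (Bv _ Bbeta) addr0 beta_ker // /kernel linearB /= TG subrr.
Qed.

Lemma perp_img_sub_transpose_meet (B : (F -> K^o) -> Prop) m f :
  (forall beta, B beta -> is_functional beta) -> is_subspace B -> has_dim B m ->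
  perp (img T (perpD B)) f -> img (transpose G) (meet B (perp (kernel T))) f.
Proof.
move=> B_lin subB [b [Bb [_ b_span]]] [f_lin f_perp].
have fT_lin : is_functional (fun x => f (T x)) := functional_comp f_lin (linearP T).
exists (fun x => f (T x)); split; last by apply: funext => x; rewrite /transpose TG.
split; last by split=> // u Tu; rewrite Tu (functional0 f_lin).
have [|c fT_c] := functional_in_span (fun i => B_lin _ (Bb i)) fT_lin.
  by move=> x bx0; apply: f_perp; exists x; split => //; apply: perpD_basis b_span bx0.
have -> : (fun x => f (T x) : K^o) = \sum_(i < m) c i *: b i.
  by apply: funext => x; rewrite sum_scale_fctE fT_c.
exact: subspace_sum.
Qed.

Lemma has_dim_complement_img_perpD (B : (F -> K^o) -> Prop) m (E' : F -> Prop) :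
  (forall beta, B beta -> is_functional beta) -> has_dim B m ->
  is_subspace E' -> direct_sum_whole (img T (perpD B)) E' -> exists n, has_dim E' n.
Proof.
move=> B_lin [b [Bb [_ b_span]]] subE' [_ U_E'_trivial].
apply: (has_dim_of_separating (phi := fun i x => b i (G x))) => //.
  by move=> i; exact: (functional_comp (B_lin _ (Bb i)) (linearP G)).
move=> x E'x bGx0; apply: U_E'_trivial => //.
by exists (G x); split; [apply: perpD_basis b_span bGx0 | apply: TG].
Qed.

End Annihilators.

Theorem proposition1 (K : fieldType) (F : lmodType K)
  (T : {linear F -> F}) (B : (F -> K^o) -> Prop) (E : F -> Prop)
  (G : {linear F -> F}) :
  (forall y : F, exists x, T x = y) ->
  (forall beta, B beta -> is_functional beta) ->
  is_subspace B -> finite_dim B ->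
  is_subspace E ->
  (forall x : F, T (G x) = x) ->
  (forall f, perp (img (T : F -> F) (perpD B)) f <->
             img (transpose (G : F -> F)) (meet B (perp (kernel (T : F -> F)))) f) /\
  (forall E' : F -> Prop, is_subspace E' ->
     direct_sum_whole (img (T : F -> F) (perpD B)) E' ->
     exists n, has_dim (perp (img (T : F -> F) (perpD B))) n /\ has_dim E' n).
Proof.
move=> _ B_lin subB [m dimB] _ TG; split=> [f|E' subE' dsum].
  split; first exact: (perp_img_sub_transpose_meet TG B_lin subB dimB).
  exact: (transpose_meet_sub_perp_img TG).
have subU : is_subspace (img T (perpD B)) by apply: subspace_img; apply: subspace_perpD.
have [n [e [E'e [e_free e_span]]]] :=
  has_dim_complement_img_perpD TG B_lin dimB subE' dsum.
exists n; split; last by exists e.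
case: dsum => U_E'_full U_E'_trivial.
exact: (has_dim_perp_complement subU subE' U_E'_full U_E'_trivial E'e e_free e_span).
Qed.
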